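(* Let $G$ be a group with neutral element $e$ and let $A=\bigoplus_{g\in G}A_g$ be a strongly $G$-graded algebra ($A_gA_h=A_{gh}$) with $A_e=\mathbb{C}$ and each $A_g$ one-dimensional (equivalently, a $\mathbb{C}[G]$-Galois object). Choose $0\neq u_g\in A_g$ for each $g$, and let $\lambda:G\times G\to\mathbb{C}^\times$ be defined by $u_gu_h=\lambda(g,h)u_{gh}$ (a 2-cocycle). Then $\Lambda(g,h):=\lambda(g,h)\lambda(h^{-1},g^{-1})$ is trivial in $H^2(G,\mathbb{C}^\times)$, i.e. there is a map $\mu:G\to\mathbb{C}^\times$ with $\Lambda(g,h)=\mu(g)\mu(h)\mu(gh)^{-1}$ for all $g,h\in G$.
   Context: $H^2(G,\mathbb{C}^\times)$ is the second group cohomology of $G$ with coefficients in $\mathbb{C}^\times$ (trivial action): 2-cocycles are maps $\lambda:G\times G\to\mathbb{C}^\times$ with $\lambda(g,h)\lambda(gh,k)=\lambda(h,k)\lambda(g,hk)$, modulo coboundaries $(g,h)\mapsto\mu(g)\mu(h)\mu(gh)^{-1}$. *)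

From HB Require Import structures.
From mathcomp Require Import all_boot all_order all_algebra.
From mathcomp Require Import all_reals.
From mathcomp.real_closed Require Export complex.
From Stdlib Require Import List.
Set Implicit Arguments. Unset Strict Implicit. Unset Printing Implicit Defensive.
Import GRing.Theory.
Local Open Scope ring_scope.

(* The complex numbers are modelled as R[i] for an arbitrary R : realType.
   A group G (possibly infinite) is given by its carrier type and operations. *)
Definition is_group (G : Type) (mul : G -> G -> G) (inv : G -> G) (e : G) : Prop :=
  [/\ forall x y z, mul x (mul y z) = mul (mul x y) z,
      forall x, mul e x = x, forall x, mul x e = x,
      forall x, mul (inv x) x = e & forall x, mul x (inv x) = e].

Definition graded_direct_sum (C : pzRingType) (G : Type) (A : lalgType C)
    (Ag : G -> A -> Prop) : Prop :=
  (forall a : A, exists (s : list G) (x : G -> A),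
      (forall g, Ag g (x g)) /\ a = \sum_(g <- s) x g) /\
  (forall (s : list G) (x : G -> A), NoDup s -> (forall g, Ag g (x g)) ->
      \sum_(g <- s) x g = 0 -> forall g, In g s -> x g = 0).

Definition one_dimensional (C : pzRingType) (A : lmodType C) (P : A -> Prop) : Prop :=
  exists v : A, v != 0 /\ forall x, P x <-> exists c : C, x = c *: v.

(* Strong grading: A_g A_h = A_{gh}, where A_g A_h is the span of the
   products a b with a in A_g, b in A_h. *)
Definition strongly_graded (C : pzRingType) (G : Type) (mul : G -> G -> G)
    (A : lalgType C) (Ag : G -> A -> Prop) : Prop :=
  forall g h,
    (forall a b, Ag g a -> Ag h b -> Ag (mul g h) (a * b)) /\
    (forall c, Ag (mul g h) c -> exists (s : list (A * A)),
        (forall p, In p s -> Ag g p.1 /\ Ag h p.2) /\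
        c = \sum_(p <- s) (p.1 * p.2)).

From HB Require Import structures.
From mathcomp Require Import all_boot all_order all_algebra.
From mathcomp Require Import all_reals.
From mathcomp.real_closed Require Import complex.
From Stdlib Require Import List.
Import GRing.Theory.
Local Open Scope ring_scope.

(* Put nu(g) u_e := u_g u_{g^-1}.  Evaluating u_g u_h u_{h^-1} u_{g^-1} from
   the middle outwards gives nu(h) nu(g), while grouping it as
   (u_g u_h)(u_{h^-1} u_{g^-1}) gives lambda(g,h) lambda(h^-1,g^-1) nu(gh),
   because (gh)^-1 = h^-1 g^-1.  So Lambda is the coboundary of nu, and nu
   never vanishes since A_g A_{g^-1} = A_e contains 1. *)

Lemma group_invM {G : Type} {mul : G -> G -> G} {inv : G -> G} {e : G} g h :
  is_group mul inv e -> inv (mul g h) = mul (inv h) (inv g).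
Proof.
move=> [mulA mul1g mulg1 mulVg mulgV].
have gh_mulV : mul (mul g h) (mul (inv h) (inv g)) = e.
  by rewrite -mulA (mulA h) mulgV mul1g mulgV.
by rewrite -[inv _]mulg1 -gh_mulV mulA mulVg mul1g.
Qed.

Lemma one_dimensional_scale {C : fieldType} {V : lmodType C} {P : V -> Prop} {v x} :
  one_dimensional P -> P v -> v != 0 -> P x -> exists a, x = a *: v.
Proof.
move=> [w [_ Pw]] Pv v_neq0 Px.
have [c def_v] := (Pw v).1 Pv; have [d ->] := (Pw x).1 Px.
have c_neq0 : c != 0 by apply: contraNneq v_neq0 => c0; rewrite def_v c0 scale0r.
by exists (d / c); rewrite def_v scalerA mulfVK.
Qed.

Lemma scalerIl {C : fieldType} {V : lmodType C} {v : V} {a b} :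
  v != 0 -> a *: v = b *: v -> a = b.
Proof.
move=> v_neq0 /eqP; rewrite -subr_eq0 -scalerBl scaler_eq0 (negbTE v_neq0) orbF.
by rewrite subr_eq0 => /eqP.
Qed.

Section CocycleSymmetrization.

Context {C : fieldType} {G : Type} {mul : G -> G -> G} {inv : G -> G} {e : G}.
Context {A : algType C} {Ag : G -> A -> Prop}.
Context {u : G -> A} {lambda : G -> G -> C} {nu : G -> C}.

Hypothesis groupG : is_group mul inv e.
Hypothesis stronglyA : strongly_graded mul Ag.
Hypothesis Ae_one : Ag e 1.
Hypothesis dimAg : forall g, one_dimensional (Ag g).
Hypothesis u_basis : forall g, Ag g (u g) /\ u g != 0.
Hypothesis u_mul : forall g h, u g * u h = lambda g h *: u (mul g h).
Hypothesis u_mulV : forall g, u g * u (inv g) = nu g *: 1.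

Lemma oneA_neq0 : (1 : A) != 0.
Proof. by apply: contraNneq (u_basis e).2 => one0; rewrite -[u e]mulr1 one0 mulr0. Qed.

Lemma homogeneous_mulV_eq0 {g a b} :
  nu g = 0 -> Ag g a -> Ag (inv g) b -> a * b = 0.
Proof.
move=> nu0 Aa Ab.
have [x ->] := one_dimensional_scale (dimAg g) (u_basis g).1 (u_basis g).2 Aa.
have [y ->] := one_dimensional_scale (dimAg (inv g)) (u_basis _).1 (u_basis _).2 Ab.
by rewrite -scalerAl -scalerAr u_mulV nu0 scale0r !scaler0.
Qed.

Lemma nu_neq0 g : nu g != 0.
Proof.
apply/eqP => nu0.
have [s [s_homog one_sum]] : exists s : list (A * A),
    (forall p, In p s -> Ag g p.1 /\ Ag (inv g) p.2) /\ 1 = \sum_(p <- s) p.1 * p.2.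
  by apply: (stronglyA g (inv g)).2; case: groupG => _ _ _ _ ->.
suff : \sum_(p <- s) p.1 * p.2 = 0 by rewrite -one_sum; apply/eqP; exact: oneA_neq0.
elim: s s_homog {one_sum} => [|p s IHs] s_homog; first by rewrite big_nil.
have [Ap1 Ap2] := s_homog p (or_introl erefl).
rewrite big_cons (homogeneous_mulV_eq0 nu0 Ap1 Ap2) add0r IHs // => q sq.
by apply: s_homog; right.
Qed.

Lemma lambda_sym_mul_nu g h :
  lambda g h * lambda (inv h) (inv g) * nu (mul g h) = nu g * nu h.
Proof.
apply: (scalerIl oneA_neq0).
have -> : (nu g * nu h) *: (1 : A) = u g * u h * (u (inv h) * u (inv g)).
  by rewrite -mulrA (mulrA (u h)) u_mulV -scalerAl mul1r -scalerAr u_mulV scalerA mulrC.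
by rewrite !u_mul -(group_invM _ _ groupG) -scalerAl -scalerAr u_mulV !scalerA.
Qed.

End CocycleSymmetrization.

Theorem lemma4p6 (R : realType) (G : Type) (mul : G -> G -> G) (inv : G -> G) (e : G)
    (A : algType R[i]) (Ag : G -> A -> Prop)
    (u : G -> A) (lambda : G -> G -> R[i]) :
  is_group mul inv e ->
  graded_direct_sum Ag ->
  strongly_graded mul Ag ->
  (forall x : A, Ag e x <-> exists c : R[i], x = c *: 1) ->
  (forall g, one_dimensional (Ag g)) ->
  (forall g, Ag g (u g) /\ u g != 0) ->
  (forall g h, u g * u h = lambda g h *: u (mul g h)) ->
  exists mu : G -> R[i],
    (forall g, mu g != 0) /\
    forall g h, lambda g h * lambda (inv h) (inv g) = mu g * mu h / mu (mul g h).
Proof.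
move=> groupG _ stronglyA Ae dimAg u_basis u_mul.
have Ae_one : Ag e 1 by apply/Ae; exists 1; rewrite scale1r.
have [c u_e] : exists c, u e = c *: 1 by apply/Ae; exact: (u_basis e).1.
have [nu u_mulV] : exists nu, forall g, u g * u (inv g) = nu g *: 1.
  exists (fun g => lambda g (inv g) * c) => g.
  by rewrite u_mul; case: groupG => _ _ _ _ ->; rewrite u_e scalerA.
have nu_neq0 := nu_neq0 groupG stronglyA Ae_one dimAg u_basis u_mulV.
exists nu; split => // g h.
by rewrite -(lambda_sym_mul_nu groupG u_basis u_mul u_mulV) mulfK.
Qed.
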